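(* Let $s_0,s_1,s_2$ be the $3$-hyperbolic functions and let $\ell_\nu^-=\{t\zeta_\nu: t\le 0\}$ for $\nu=0,1,2$. Then none of $s_0,s_1,s_2$ vanishes on $\Omega=\mathbb{C}\setminus\bigcup_{\nu=0}^{2}\ell_\nu^-$; that is, every zero of each $s_k$ lies on one of the three rays $\ell_0^-,\ell_1^-,\ell_2^-$ (which are the bisectors of the three sectors into which the rays $\{t\zeta_\nu: t>0\}$ divide the plane).
   Context: Let $\zeta_m=e^{2\pi i m/3}$, $m=0,1,2$. The $3$-hyperbolic functions are $s_k(z)=\frac13\sum_{m=0}^{2}\zeta_m^{-k}e^{z\zeta_m}$, $k=0,1,2$, $z\in\mathbb{C}$. *)

From Stdlib Require Import Reals.
From Coquelicot Require Import Coquelicot.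
Open Scope R_scope.

Definition cexp (z : C) : C :=
  (exp (Re z) * cos (Im z), exp (Re z) * sin (Im z)).

Definition zeta (m : nat) : C := cexp (RtoC 0 + Ci * RtoC (2 * PI * INR m / 3))%C.

Definition s (k : nat) (z : C) : C :=
  (/ RtoC 3 * (Cinv (Cpow (zeta 0) k) * cexp (z * zeta 0)
              + Cinv (Cpow (zeta 1) k) * cexp (z * zeta 1)
              + Cinv (Cpow (zeta 2) k) * cexp (z * zeta 2)))%C.

Definition on_neg_ray (nu : nat) (z : C) : Prop :=
  exists t : R, t <= 0 /\ z = (RtoC t * zeta nu)%C.

From Stdlib Require Import Reals Lra Lia Ratan.
From Coquelicot Require Import Coquelicot.
Open Scope R_scope.

(* Write [s_k z = 1/3 * sum_m e^(a_m) e^(i b_m)] with [a_m = Re (z zeta_m)] and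
   [b_m = Im (z zeta_m) - 2 pi k m / 3], so that a zero of [s_k] is a closed
   triangle of three phasors. Suppose [a_j] is a strict maximum. Rotating so that
   phasors [j] and [n] are symmetric about the real axis and eliminating their
   common angle puts phasor [m] on the ellipse with semi-axes [e^(a_j) + e^(a_n)]
   and [e^(a_j) - e^(a_n)]. Modulo [pi], the offset of [b_m] from the bisector
   [(b_j + b_n) / 2] is [sqrt 3 / 2 * (a_j - a_n)], and this small offset forces the
   radius of the ellipse in that direction above [e^(a_n)]: so [a_n < a_m], and
   symmetrically [a_m < a_n]. Hence the maximum of the [a_m] is attained twice,
   which says exactly that [z] lies on one of the rays. *)

Lemma sin_sqr_le_sqr x : sin x ^ 2 <= x ^ 2.
Proof.
  assert (Hpos : forall u, 0 < u -> sin u ^ 2 <= u ^ 2).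
  { intros u Hu. pose proof (sin_lt_x u Hu).
    destruct (Rle_lt_dec 1 u).
    - pose proof (SIN_bound u). nra.
    - assert (0 <= sin u) by (apply sin_ge_0; pose proof PI2_1; lra).
      nra. }
  destruct (Rtotal_order x 0) as [Hx|[Hx|Hx]].
  - replace (sin x ^ 2) with (sin (- x) ^ 2) by (rewrite sin_neg; ring).
    replace (x ^ 2) with ((- x) ^ 2) by ring. apply Hpos; lra.
  - subst. rewrite sin_0. lra.
  - apply Hpos; lra.
Qed.

Lemma sin_sqr_le_sqr_sub_IZR_PI w (n : Z) : sin w ^ 2 <= (w - IZR n * PI) ^ 2.
Proof.
  assert (Hs : sin (IZR n * PI) = 0) by (apply sin_eq_0_1; eauto).
  assert (Hc : cos (IZR n * PI) ^ 2 = 1).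
  { pose proof (sin2_cos2 (IZR n * PI)) as P. unfold Rsqr in P. rewrite Hs in P. lra. }
  replace (sin w ^ 2) with (sin (w - IZR n * PI) ^ 2).
  - apply sin_sqr_le_sqr.
  - rewrite sin_minus, Hs. transitivity (sin w ^ 2 * cos (IZR n * PI) ^ 2); [ring|].
    rewrite Hc. ring.
Qed.

Lemma rotation_eq0 c s A B :
  c ^ 2 + s ^ 2 = 1 -> c * A - s * B = 0 -> s * A + c * B = 0 -> A = 0 /\ B = 0.
Proof.
  intros Hcs H1 H2. split.
  - transitivity (A * (c ^ 2 + s ^ 2)); [rewrite Hcs; ring|].
    transitivity (c * (c * A - s * B) + s * (s * A + c * B)); [ring|]. rewrite H1, H2. ring.
  - transitivity (B * (c ^ 2 + s ^ 2)); [rewrite Hcs; ring|].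
    transitivity (c * (s * A + c * B) - s * (c * A - s * B)); [ring|]. rewrite H1, H2. ring.
Qed.

Lemma phasors_rotate Ej Em En g th r :
  Ej * cos (g - th) + Em * cos (g + r) + En * cos (g + th) = 0 ->
  Ej * sin (g - th) + Em * sin (g + r) + En * sin (g + th) = 0 ->
  (Ej + En) * cos th + Em * cos r = 0 /\ (En - Ej) * sin th + Em * sin r = 0.
Proof.
  intros H1 H2. apply (rotation_eq0 (cos g) (sin g)).
  - pose proof (sin2_cos2 g) as P. unfold Rsqr in P. lra.
  - rewrite <- H1, cos_minus, !cos_plus. ring.
  - rewrite <- H2, sin_minus, !sin_plus. ring.
Qed.

(* Eliminating [th]: the point [-Em e^{ir}] lies on the ellipse with semi-axes
   [Ej + En] and [Ej - En]. *)
Lemma ellipse_identity Ej Em En th r :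
  (Ej + En) * cos th + Em * cos r = 0 -> (En - Ej) * sin th + Em * sin r = 0 ->
  (Ej ^ 2 - En ^ 2) ^ 2 = Em ^ 2 * ((Ej - En) ^ 2 + 4 * Ej * En * sin r ^ 2).
Proof.
  intros Hc Hs.
  pose proof (sin2_cos2 th) as Pth. pose proof (sin2_cos2 r) as Pr. unfold Rsqr in Pth, Pr.
  assert (HC : Em * cos r = - ((Ej + En) * cos th)) by lra.
  assert (HS : Em * sin r = (Ej - En) * sin th) by lra.
  transitivity ((Ej ^ 2 - En ^ 2) ^ 2 * (sin th * sin th + cos th * cos th)); [rewrite Pth; ring|].
  transitivity (Em ^ 2 * ((Ej - En) ^ 2 * (sin r * sin r + cos r * cos r) + 4 * Ej * En * sin r ^ 2));
    [|rewrite Pr; ring].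
  transitivity ((Ej - En) ^ 2 * (Em * cos r) ^ 2 + (Ej + En) ^ 2 * (Em * sin r) ^ 2); [|ring].
  rewrite HC, HS. ring.
Qed.

Lemma exp_sub1_sqr_bound q S :
  0 < q -> S ^ 2 <= 3 / 4 * q ^ 2 -> 4 * S ^ 2 < (exp q - 1) ^ 2 * (exp q + 2).
Proof.
  intros Hq HS. pose proof (exp_ineq1 q (Rgt_not_eq _ _ Hq)).
  assert (q ^ 2 < (exp q - 1) ^ 2) by nra.
  assert (0 < q ^ 2) by nra.
  nra.
Qed.

Lemma ellipse_radius_gt En E S :
  0 < En -> 1 < E -> 4 * S ^ 2 < (E - 1) ^ 2 * (E + 2) ->
  En ^ 2 * ((En * E - En) ^ 2 + 4 * (En * E) * En * S ^ 2) < ((En * E) ^ 2 - En ^ 2) ^ 2.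
Proof.
  intros HEn HE HS.
  replace (En ^ 2 * ((En * E - En) ^ 2 + 4 * (En * E) * En * S ^ 2))
    with (En ^ 4 * ((E - 1) ^ 2 + E * (4 * S ^ 2))) by ring.
  replace (((En * E) ^ 2 - En ^ 2) ^ 2)
    with (En ^ 4 * ((E - 1) ^ 2 + E * ((E - 1) ^ 2 * (E + 2)))) by ring.
  apply Rmult_lt_compat_l; [apply pow_lt; lra|].
  apply Rplus_lt_compat_l, Rmult_lt_compat_l; lra.
Qed.

Lemma phasors_sum0_lt aj am an bj bm bn :
  exp aj * cos bj + exp am * cos bm + exp an * cos bn = 0 ->
  exp aj * sin bj + exp am * sin bm + exp an * sin bn = 0 ->
  an < aj -> sin (bm - (bj + bn) / 2) ^ 2 <= 3 / 4 * (aj - an) ^ 2 -> an < am.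
Proof.
  intros H1 H2 Hjn Hgap.
  set (g := (bj + bn) / 2) in Hgap. set (r := bm - g) in Hgap. set (th := (bn - bj) / 2).
  assert (Hj : bj = g - th) by (unfold g, th; field).
  assert (Hn : bn = g + th) by (unfold g, th; field).
  assert (Hm : bm = g + r) by (unfold r; ring).
  clearbody g r th. rewrite Hj, Hm, Hn in H1, H2.
  destruct (phasors_rotate _ _ _ _ _ _ H1 H2) as [Hre Him].
  pose proof (ellipse_identity _ _ _ _ _ Hre Him) as Hell.
  apply Rnot_le_lt. intros Hmn.
  assert (HEj : exp aj = exp an * exp (aj - an)) by (rewrite <- exp_plus; f_equal; ring).
  assert (HEm : exp am <= exp an)
    by (destruct Hmn as [Hlt|Heq]; [left; apply exp_increasing; exact Hlt|rewrite Heq; lra]).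
  assert (HE : 1 < exp (aj - an)) by (pose proof (exp_ineq1_le (aj - an)); lra).
  assert (Hlt := ellipse_radius_gt (exp an) (exp (aj - an)) (sin r) (exp_pos an) HE
                   (exp_sub1_sqr_bound (aj - an) (sin r) ltac:(lra) Hgap)).
  rewrite <- HEj in Hlt.
  assert (0 <= (exp aj - exp an) ^ 2 + 4 * exp aj * exp an * sin r ^ 2).
  { pose proof (exp_pos aj). pose proof (exp_pos an).
    assert (0 <= exp aj * exp an * sin r ^ 2) by (apply Rmult_le_pos; nra).
    nra. }
  assert (exp am ^ 2 <= exp an ^ 2) by (pose proof (exp_pos am); nra).
  assert (exp am ^ 2 * ((exp aj - exp an) ^ 2 + 4 * exp aj * exp an * sin r ^ 2)
          <= exp an ^ 2 * ((exp aj - exp an) ^ 2 + 4 * exp aj * exp an * sin r ^ 2))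
    by (apply Rmult_le_compat_r; assumption).
  lra.
Qed.

Lemma phasors_sum0_no_strict_max aj am an bj bm bn :
  exp aj * cos bj + exp am * cos bm + exp an * cos bn = 0 ->
  exp aj * sin bj + exp am * sin bm + exp an * sin bn = 0 ->
  sin (bm - (bn + bj) / 2) ^ 2 <= 3 / 4 * (an - aj) ^ 2 ->
  sin (bn - (bj + bm) / 2) ^ 2 <= 3 / 4 * (aj - am) ^ 2 ->
  ~ (am < aj /\ an < aj).
Proof.
  intros H1 H2 Gm Gn [Hm Hn].
  replace (bn + bj) with (bj + bn) in Gm by ring.
  replace ((an - aj) ^ 2) with ((aj - an) ^ 2) in Gm by ring.
  assert (an < am) by exact (phasors_sum0_lt aj am an bj bm bn H1 H2 Hn Gm).
  assert (am < an) by (apply (phasors_sum0_lt aj an am bj bn bm); [lra|lra|lra|exact Gn]).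
  lra.
Qed.

Lemma phasors_sum0_max_attained_twice a0 a1 a2 b0 b1 b2 :
  exp a0 * cos b0 + exp a1 * cos b1 + exp a2 * cos b2 = 0 ->
  exp a0 * sin b0 + exp a1 * sin b1 + exp a2 * sin b2 = 0 ->
  sin (b0 - (b1 + b2) / 2) ^ 2 <= 3 / 4 * (a1 - a2) ^ 2 ->
  sin (b1 - (b2 + b0) / 2) ^ 2 <= 3 / 4 * (a2 - a0) ^ 2 ->
  sin (b2 - (b0 + b1) / 2) ^ 2 <= 3 / 4 * (a0 - a1) ^ 2 ->
  (a1 = a2 /\ a0 <= a1) \/ (a2 = a0 /\ a1 <= a2) \/ (a0 = a1 /\ a2 <= a0).
Proof.
  intros H1 H2 G0 G1 G2.
  assert (N0 := phasors_sum0_no_strict_max a0 a1 a2 b0 b1 b2 H1 H2 G1 G2).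
  assert (N1 := phasors_sum0_no_strict_max a1 a2 a0 b1 b2 b0 ltac:(lra) ltac:(lra) G2 G0).
  assert (N2 := phasors_sum0_no_strict_max a2 a0 a1 b2 b0 b1 ltac:(lra) ltac:(lra) G0 G1).
  destruct (Rtotal_order a1 a2) as [h1|[h1|h1]];
  destruct (Rtotal_order a2 a0) as [h2|[h2|h2]];
  destruct (Rtotal_order a0 a1) as [h3|[h3|h3]];
  first [ left; split; lra | right; left; split; lra | right; right; split; lra
        | exfalso; lra
        | exfalso; apply N0; split; lra | exfalso; apply N1; split; lra
        | exfalso; apply N2; split; lra ].
Qed.

Definition theta (m : nat) : R := 2 * PI * INR m / 3.

Definition term_logabs (z : C) (m : nat) : R := Re (z * zeta m).

Definition term_arg (k : nat) (z : C) (m : nat) : R := Im (z * zeta m) - INR k * theta m.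

Lemma zeta_polar m : zeta m = (cos (theta m), sin (theta m)).
Proof.
  unfold zeta, cexp, theta, Re, Im, Cplus, Cmult, Ci, RtoC; simpl.
  replace (0 + (0 * (2 * PI * INR m / 3) - 1 * 0)) with 0 by ring.
  replace (0 + (0 * 0 + 1 * (2 * PI * INR m / 3))) with (2 * PI * INR m / 3) by ring.
  rewrite exp_0. f_equal; ring.
Qed.

Lemma Cpow_polar a n : Cpow (cos a, sin a) n = (cos (INR n * a), sin (INR n * a)).
Proof.
  induction n as [|n IHn].
  - simpl. rewrite Rmult_0_l, cos_0, sin_0. reflexivity.
  - simpl Cpow. rewrite IHn, S_INR.
    replace ((INR n + 1) * a) with (a + INR n * a) by ring.
    rewrite cos_plus, sin_plus. unfold Cmult; simpl. f_equal; ring.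
Qed.

Lemma Cinv_polar a : Cinv (cos a, sin a) = (cos (- a), sin (- a)).
Proof.
  unfold Cinv; simpl. pose proof (sin2_cos2 a) as P. unfold Rsqr in P.
  replace (cos a * (cos a * 1) + sin a * (sin a * 1)) with 1 by lra.
  rewrite cos_neg, sin_neg. apply injective_projections; simpl; field.
Qed.

Lemma s_term_polar k z m :
  (Cinv (Cpow (zeta m) k) * cexp (z * zeta m))%C =
  (exp (term_logabs z m) * cos (term_arg k z m), exp (term_logabs z m) * sin (term_arg k z m)).
Proof.
  unfold term_logabs, term_arg, cexp. generalize (z * zeta m)%C. intros [u v].
  rewrite zeta_polar, Cpow_polar, Cinv_polar. unfold Cmult; simpl.
  unfold Rminus. rewrite cos_plus, sin_plus. f_equal; ring.
Qed.

Lemma s_eq0_phasors k z :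
  s k z = RtoC 0 ->
  exp (term_logabs z 0) * cos (term_arg k z 0) + exp (term_logabs z 1) * cos (term_arg k z 1)
    + exp (term_logabs z 2) * cos (term_arg k z 2) = 0 /\
  exp (term_logabs z 0) * sin (term_arg k z 0) + exp (term_logabs z 1) * sin (term_arg k z 1)
    + exp (term_logabs z 2) * sin (term_arg k z 2) = 0.
Proof.
  unfold s. rewrite !s_term_polar. intros H.
  unfold Cinv, Cmult, Cplus, RtoC in H; simpl in H. injection H as Hre Him.
  split; field_simplify in Hre; field_simplify in Him; lra.
Qed.

Lemma theta_0 : theta 0 = 0.
Proof. unfold theta; simpl; field. Qed.

Lemma theta_1 : theta 1 = 2 * (PI / 3).
Proof. unfold theta; simpl; field. Qed.

Lemma theta_2 : theta 2 = PI / 3 + PI.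
Proof. unfold theta; simpl; field. Qed.

Lemma zeta_0 : zeta 0 = (1, 0).
Proof. rewrite zeta_polar, theta_0, cos_0, sin_0. reflexivity. Qed.

Lemma zeta_1 : zeta 1 = (-1 / 2, sqrt 3 / 2).
Proof. rewrite zeta_polar, theta_1, cos_2PI3, sin_2PI3. reflexivity. Qed.

Lemma zeta_2 : zeta 2 = (-1 / 2, - (sqrt 3 / 2)).
Proof.
  rewrite zeta_polar, theta_2, neg_cos, neg_sin, cos_PI3, sin_PI3.
  f_equal; field.
Qed.

Lemma sqrt3_sqr : sqrt 3 * sqrt 3 = 3.
Proof. apply sqrt_sqrt; lra. Qed.

Ltac unfold_terms :=
  unfold term_arg, term_logabs;
  rewrite ?zeta_0, ?zeta_1, ?zeta_2, ?theta_0, ?theta_1, ?theta_2;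
  unfold Cmult, Re, Im; simpl.

Lemma sin_sqr_term_arg_gap_0 k x y :
  sin (term_arg k (x, y) 0 - (term_arg k (x, y) 1 + term_arg k (x, y) 2) / 2) ^ 2
  <= 3 / 4 * (term_logabs (x, y) 1 - term_logabs (x, y) 2) ^ 2.
Proof.
  eapply Rle_trans; [apply (sin_sqr_le_sqr_sub_IZR_PI _ (Z.of_nat k))|].
  rewrite <- INR_IZR_INZ. unfold_terms. pose proof sqrt3_sqr. nra.
Qed.

Lemma sin_sqr_term_arg_gap_1 k x y :
  sin (term_arg k (x, y) 1 - (term_arg k (x, y) 2 + term_arg k (x, y) 0) / 2) ^ 2
  <= 3 / 4 * (term_logabs (x, y) 2 - term_logabs (x, y) 0) ^ 2.
Proof.
  eapply Rle_trans; [apply (sin_sqr_le_sqr_sub_IZR_PI _ 0)|].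
  unfold_terms. pose proof sqrt3_sqr. nra.
Qed.

Lemma sin_sqr_term_arg_gap_2 k x y :
  sin (term_arg k (x, y) 2 - (term_arg k (x, y) 0 + term_arg k (x, y) 1) / 2) ^ 2
  <= 3 / 4 * (term_logabs (x, y) 0 - term_logabs (x, y) 1) ^ 2.
Proof.
  eapply Rle_trans; [apply (sin_sqr_le_sqr_sub_IZR_PI _ (- Z.of_nat k))|].
  rewrite opp_IZR, <- INR_IZR_INZ. unfold_terms. pose proof sqrt3_sqr. nra.
Qed.

Lemma on_neg_ray_of_term_logabs_ties x y :
  (term_logabs (x, y) 1 = term_logabs (x, y) 2 /\ term_logabs (x, y) 0 <= term_logabs (x, y) 1)
  \/ (term_logabs (x, y) 2 = term_logabs (x, y) 0 /\ term_logabs (x, y) 1 <= term_logabs (x, y) 2)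
  \/ (term_logabs (x, y) 0 = term_logabs (x, y) 1 /\ term_logabs (x, y) 2 <= term_logabs (x, y) 0) ->
  exists nu : nat, (nu <= 2)%nat /\ on_neg_ray nu (x, y).
Proof.
  unfold_terms. pose proof sqrt3_sqr.
  assert (Hsqrt3 : 0 < sqrt 3) by (apply sqrt_lt_R0; lra).
  intros [[H12 H0]|[[H20 H1]|[H01 H2]]].
  - assert (Hy : y = 0) by nra.
    exists 0%nat. split; [lia|]. exists x. split; [lra|].
    rewrite zeta_0. unfold Cmult, RtoC; simpl. f_equal; lra.
  - assert (Hy : y = sqrt 3 * x) by nra.
    exists 2%nat. split; [lia|]. exists (-2 * x). split; [lra|].
    rewrite zeta_2. unfold Cmult, RtoC; simpl. f_equal; lra.
  - assert (Hy : y = - sqrt 3 * x) by nra.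
    exists 1%nat. split; [lia|]. exists (-2 * x). split; [lra|].
    rewrite zeta_1. unfold Cmult, RtoC; simpl. f_equal; lra.
Qed.

Theorem proposition5p1 :
  forall (k : nat) (z : C), (k <= 2)%nat ->
    s k z = RtoC 0 ->
    exists nu : nat, (nu <= 2)%nat /\ on_neg_ray nu z.
Proof.
  intros k [x y] _ Hs.
  destruct (s_eq0_phasors k (x, y) Hs) as [Hre Him].
  apply on_neg_ray_of_term_logabs_ties.
  exact (phasors_sum0_max_attained_twice _ _ _ _ _ _ Hre Him
           (sin_sqr_term_arg_gap_0 k x y) (sin_sqr_term_arg_gap_1 k x y)
           (sin_sqr_term_arg_gap_2 k x y)).
Qed.
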